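(* Let $X$ be an $n$-dimensional real normed space and let $Y \subseteq X$ be a $k$-dimensional subspace, where $1 \leq k \leq n-1$. Then there exists $C>0$ (depending on $Y$) such that for every $k$-dimensional subspace $Y_0 \subseteq X$ we have $\lambda(Y_0, X) \leq \lambda(Y, X) + C\,d(Y, Y_0)$.
   Context: For a subspace $V\subseteq X$, $\lambda(V,X)$ is the infimum of the operator norms of linear projections $P:X\to V$ ($P|_V=\mathrm{id}_V$). For two $k$-dimensional subspaces $Y,Z$, $d(Y,Z)$ is the Hausdorff distance (with respect to the norm of $X$) between the unit spheres of $Y$ and $Z$. *)

From HB Require Import structures.
From mathcomp Require Import all_boot all_order all_algebra.
From mathcomp Require Import classical_sets reals.
Set Implicit Arguments. Unset Strict Implicit. Unset Printing Implicit Defensive.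
Import Order.TTheory GRing.Theory Num.Theory.
Local Open Scope ring_scope.
Local Open Scope classical_set_scope.

(* An n-dimensional real normed space is modelled (up to isometry) as
   'rV[R]_n equipped with an arbitrary norm N. *)
Definition is_norm (R : realType) (n : nat) (N : 'rV[R]_n -> R) : Prop :=
  [/\ forall x y, N (x + y) <= N x + N y,
      forall (a : R) x, N (a *: x) = `|a| * N x
    & forall x, N x = 0 -> x = 0].

(* Subspaces are row spaces (mxalgebra) of square matrices; a linear map
   X -> X is a matrix P acting by v |-> v *m P. *)

Definition opnorm (R : realType) (n : nat) (N : 'rV[R]_n -> R) (P : 'M[R]_n) : R :=
  sup [set N (v *m P) | v in [set v : 'rV[R]_n | N v <= 1]].

Definition is_projection (R : realType) (n : nat) (V P : 'M[R]_n) : Prop :=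
  (P <= V)%MS /\ (forall v : 'rV[R]_n, (v <= V)%MS -> v *m P = v).

Definition proj_const (R : realType) (n : nat) (N : 'rV[R]_n -> R) (V : 'M[R]_n) : R :=
  inf [set opnorm N P | P in [set P | is_projection V P]].

Definition unit_sphere (R : realType) (n : nat) (N : 'rV[R]_n -> R) (V : 'M[R]_n)
  : set 'rV[R]_n := [set v | (v <= V)%MS /\ N v = 1].

Definition sphere_dist (R : realType) (n : nat) (N : 'rV[R]_n -> R) (Y Z : 'M[R]_n) : R :=
  Num.max
    (sup [set inf [set N (y - z) | z in unit_sphere N Z] | y in unit_sphere N Y])
    (sup [set inf [set N (y - z) | y in unit_sphere N Y] | z in unit_sphere N Z]).

From HB Require Import structures.
From mathcomp Require Import all_boot all_order all_algebra.
From mathcomp Require Import all_classical all_reals all_analysis.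
From mathcomp Require Import lra.
Set Implicit Arguments. Unset Strict Implicit. Unset Printing Implicit Defensive.
Import Order.TTheory GRing.Theory Num.Theory.
Import numFieldNormedType.Exports.
Local Open Scope ring_scope.
Local Open Scope classical_set_scope.

(* Let d = d(Y, Y0).  If d is large, it suffices that lambda(Y0, X) is bounded
   independently of Y0: by equivalence of norms the Euclidean orthogonal
   projections have uniformly bounded N-operator norm.  If d is small, move each
   row y_i of a matrix spanning Y to some z_i in Y0 with N(z_i - y_i) <= delta N(y_i)
   for a delta > d; then S = 1 + pinv(Y) (Z - Y) is within O(delta) of the
   identity and maps Y onto Y0, so conjugating a projection P onto Y by S gives a
   projection onto Y0 of norm at most (1 + O(delta)) |P|.  Letting delta decrease
   to d yields lambda(Y0, X) <= (1 + O(d)) lambda(Y, X). *)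

Lemma mxnorm_entry_le (K : realFieldType) m n (A : 'M[K]_(m, n)) i j : `|A i j| <= `|A|.
Proof. by rewrite [leRHS]mx_normrE; apply/bigmax_geP; right; exists (i, j). Qed.

Section NormProperties.
Variables (R : realType) (n : nat) (N : 'rV[R]_n -> R).
Hypothesis hN : is_norm N.

Lemma ND_le x y : N (x + y) <= N x + N y.
Proof. by case: hN. Qed.

Lemma NZ (a : R) x : N (a *: x) = `|a| * N x.
Proof. by case: hN. Qed.

Lemma N_eq0 x : N x = 0 -> x = 0.
Proof. by case: hN => _ _; apply. Qed.

Lemma N0 : N 0 = 0.
Proof. by rewrite -(scale0r (0 : 'rV[R]_n)) NZ normr0 mul0r. Qed.

Lemma NN x : N (- x) = N x.
Proof. by rewrite -scaleN1r NZ normrN normr1 mul1r. Qed.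

Lemma N_ge0 x : 0 <= N x.
Proof. by have := ND_le x (- x); rewrite subrr N0 NN -mulr2n pmulrn_lge0. Qed.

Lemma N_gt0 x : x != 0 -> 0 < N x.
Proof. by move=> x0; rewrite lt_def N_ge0 andbT; apply: contra x0 => /eqP/N_eq0->. Qed.

Lemma N_normalize x : x != 0 -> N ((N x)^-1 *: x) = 1.
Proof.
by move=> x0; rewrite NZ ger0_norm ?invr_ge0 ?N_ge0 // mulVf // gt_eqF ?N_gt0.
Qed.

Lemma N_dist x y : `|N x - N y| <= N (x - y).
Proof.
have N_subr u v : N u - N v <= N (u - v).
  by rewrite lerBlDr; apply: le_trans (ND_le _ _); rewrite subrK.
by rewrite ler_norml N_subr andbT lerNl opprB -[N (x - y)]NN opprB N_subr.
Qed.

Lemma N_sum_le (I : Type) (r : seq I) (F : I -> 'rV[R]_n) :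
  N (\sum_(i <- r) F i) <= \sum_(i <- r) N (F i).
Proof.
elim: r => [|a r IH]; first by rewrite !big_nil N0.
by rewrite !big_cons; apply: le_trans (ND_le _ _) _; apply: lerD.
Qed.

Lemma N_le_sum_coord v : N v <= \sum_j `|v 0 j| * N (delta_mx 0 j).
Proof.
rewrite {1}[v]row_sum_delta; apply: le_trans (N_sum_le _ _) _.
by apply: ler_sum => j _; rewrite NZ.
Qed.

Lemma N_le_mxnorm : exists2 c, 0 <= c & forall v, N v <= c * `|v|.
Proof.
exists (\sum_j N (delta_mx 0 j)) => [|v]; first by apply: sumr_ge0 => j _; apply: N_ge0.
apply: le_trans (N_le_sum_coord v) _; rewrite mulr_suml; apply: ler_sum => j _.
by rewrite mulrC ler_wpM2l ?N_ge0 ?mxnorm_entry_le.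
Qed.

Lemma N_continuous : continuous N.
Proof.
have [c c0 Nc] := N_le_mxnorm; move=> x.
apply/(@cvgrPdist_lt _ _ _ (nbhs x) (@nbhs_filter _ x)) => e e0.
have c1 : 0 < c + 1 by lra.
near=> y; apply: le_lt_trans (N_dist _ _) _; apply: le_lt_trans (Nc _) _.
apply: (@le_lt_trans _ _ ((c + 1) * `|x - y|)); first by rewrite ler_wpM2r //; lra.
rewrite mulrC -ltr_pdivlMr //; near: y.
by apply: filterS (near_ball x _ (divr_gt0 e0 c1)) => y; rewrite -ball_normE.
Unshelve. all: by end_near. Qed.

End NormProperties.

Lemma mxnorm_le_N (R : realType) (n : nat) (N : 'rV[R]_n -> R) : is_norm N ->
  exists2 c, 0 <= c & forall v, `|v| <= c * N v.
Proof.
case: n N => [|m] N hN.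
  by exists 0 => // v; rewrite (thinmx0 v) normr0 mul0r.
pose S := [set v : 'rV[R]_m.+1 | `|v| = 1].
have normalize_in v : v != 0 -> S (`|v|^-1 *: v).
  move=> v0; rewrite /S /= normrZ normrV ?unitfE ?normr_eq0 //.
  by rewrite normr_id mulVf ?normr_eq0.
have S0 : S !=set0.
  pose e : 'rV[R]_m.+1 := const_mx 1.
  exists (`|e|^-1 *: e); apply: normalize_in.
  by apply/negP => /eqP/rowP/(_ ord0); rewrite !mxE => /eqP; rewrite oner_eq0.
have cS : compact S.
  have bS : \forall M \near +oo, globally S [set x : 'rV[R]_m.+1 | `|x| <= M].
    by near=> M => v /= ->; near: M; apply: nbhs_pinfty_ge; apply: num_real.
  apply: bounded_closed_compact; first exact: bS.
  apply: (@preimage_closed _ _ (@Num.norm _ 'rV[R]_m.+1) [set 1]).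
    by move=> x _; apply: norm_continuous.
  exact: closed_eq.
have [u Su umin] := compact_EVT_min S0 cS (continuous_subspaceT (N_continuous hN)).
move: Su; rewrite inE => Su.
have Nu : 0 < N u.
  apply: N_gt0 => //; apply/eqP => u0.
  by move: Su; rewrite /S /= u0 normr0 => /eqP; rewrite eq_sym oner_eq0.
exists (N u)^-1 => [|v]; first by rewrite invr_ge0 ltW.
have [->|v0] := eqVneq v 0; first by rewrite normr0 N0 // mulr0.
have := umin _ (mem_set (normalize_in v v0)); rewrite NZ // normrV ?unitfE ?normr_eq0 //.
by rewrite normr_id ler_pdivlMl ?normr_gt0 // mulrC -ler_pdivlMl.
Unshelve. all: by end_near. Qed.

Section OperatorNorm.
Variables (R : realType) (n : nat) (N : 'rV[R]_n -> R).
Hypothesis hN : is_norm N.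

Lemma sum_coord_le m (F : 'M[R]_(n, m)) (a : 'I_m -> R) : (forall j, 0 <= a j) ->
  exists2 K, 0 <= K & forall w, \sum_j `|(w *m F) 0 j| * a j <= K * N w.
Proof.
move=> a0; have [c c0 cN] := mxnorm_le_N hN.
pose K := \sum_j (\sum_i `|F i j|) * a j.
have K0 : 0 <= K by apply: sumr_ge0 => j _; rewrite mulr_ge0 ?sumr_ge0.
exists (c * K) => [|w]; first exact: mulr_ge0.
apply: (@le_trans _ _ (`|w| * K)); last by rewrite mulrAC ler_wpM2r.
rewrite mulr_sumr; apply: ler_sum => j _; rewrite mulrA ler_wpM2r // mxE mulr_sumr.
apply: le_trans (ler_norm_sum _ _ _) _; apply: ler_sum => i _.
by rewrite normrM ler_wpM2r // mxnorm_entry_le.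
Qed.

Lemma mulmx_bounded (M : 'M[R]_n) :
  exists2 K, 0 <= K & forall w, N (w *m M) <= K * N w.
Proof.
have [K K0 HK] := sum_coord_le M (fun j => N_ge0 hN (delta_mx 0 j)).
by exists K => // w; apply: le_trans (N_le_sum_coord hN _) (HK w).
Qed.

Lemma opnorm_le (P : 'M[R]_n) K : 0 <= K ->
  (forall v, N (v *m P) <= K * N v) -> opnorm N P <= K.
Proof.
move=> K0 HK; apply: ge_sup; first by exists (N (0 *m P)), 0 => //=; rewrite N0.
by move=> _ [v /= Nv <-]; apply: le_trans (HK v) _; rewrite -[leRHS]mulr1 ler_wpM2l.
Qed.

Lemma opnorm_image_bounded (P : 'M[R]_n) :
  has_ubound [set N (v *m P) | v in [set v : 'rV[R]_n | N v <= 1]].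
Proof.
have [K K0 HK] := mulmx_bounded P.
by exists K => _ [v /= Nv <-]; apply: le_trans (HK v) _; rewrite -[leRHS]mulr1 ler_wpM2l.
Qed.

Lemma opnorm_ge0 (P : 'M[R]_n) : 0 <= opnorm N P.
Proof.
apply: le_trans (N_ge0 hN (0 *m P)) _.
apply: ub_le_sup; first exact: opnorm_image_bounded.
by exists 0 => //=; rewrite N0.
Qed.

Lemma N_mulmx_le (P : 'M[R]_n) v : N (v *m P) <= opnorm N P * N v.
Proof.
have [->|v0] := eqVneq v 0; first by rewrite mul0mx N0 // mulr0.
have Nv := N_gt0 hN v0.
rewrite -ler_pdivrMr // mulrC -[(N v)^-1]ger0_norm ?invr_ge0 ?N_ge0 //.
rewrite -NZ // scalemxAl; apply: ub_le_sup; first exact: opnorm_image_bounded.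
by exists ((N v)^-1 *: v); rewrite //= N_normalize.
Qed.

Lemma opnorm_mulmx_le (A B : 'M[R]_n) : opnorm N (A *m B) <= opnorm N A * opnorm N B.
Proof.
apply: opnorm_le => [|v]; first by rewrite mulr_ge0 ?opnorm_ge0.
rewrite mulmxA; apply: le_trans (N_mulmx_le _ _) _.
by rewrite [opnorm N A * _]mulrC -mulrA ler_wpM2l ?opnorm_ge0 // N_mulmx_le.
Qed.

Lemma opnorm_add1_le (E : 'M[R]_n) : opnorm N (1%:M + E) <= 1 + opnorm N E.
Proof.
apply: opnorm_le => [|v]; first by rewrite addr_ge0 ?opnorm_ge0.
rewrite mulmxDr mulmx1 mulrDl mul1r; apply: le_trans (ND_le hN _ _) _.
by rewrite lerD2l N_mulmx_le.
Qed.

Lemma N_mulmx_add1_ge (E : 'M[R]_n) v : (1 - opnorm N E) * N v <= N (v *m (1%:M + E)).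
Proof.
have vE : v = v *m (1%:M + E) - v *m E by rewrite mulmxDr mulmx1 addrK.
rewrite mulrBl mul1r lerBlDr {1}vE; apply: le_trans (ND_le hN _ _) _.
by rewrite NN // lerD2l N_mulmx_le.
Qed.

Lemma add1_unitmx (E : 'M[R]_n) : opnorm N E < 1 -> 1%:M + E \in unitmx.
Proof.
move=> E1; rewrite -row_free_unit; apply: inj_row_free => v vE0.
apply: (N_eq0 hN); apply/eqP; rewrite eq_le N_ge0 // andbT.
have E1' : 0 < 1 - opnorm N E by rewrite subr_gt0.
by rewrite -(pmulr_rle0 _ E1') -(N0 hN) -vE0 N_mulmx_add1_ge.
Qed.

Lemma opnorm_inv_add1_le (E : 'M[R]_n) : opnorm N E < 1 ->
  opnorm N (invmx (1%:M + E)) <= (1 - opnorm N E)^-1.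
Proof.
move=> E1; have E1' : 0 < 1 - opnorm N E by rewrite subr_gt0.
apply: opnorm_le => [|v]; first by rewrite invr_ge0 ltW.
rewrite ler_pdivlMl //; apply: le_trans (N_mulmx_add1_ge _ _) _.
by rewrite mulmxKV ?add1_unitmx.
Qed.

End OperatorNorm.

Section Projections.
Variables (R : realType) (n : nat).
Implicit Types (V W P S Q : 'M[R]_n) (v : 'rV[R]_n).

Lemma is_projection_eqmx V W P : (V :=: W)%MS -> is_projection V P -> is_projection W P.
Proof. by move=> VW [PV HP]; split => [|v]; rewrite -VW //; apply: HP. Qed.

Lemma is_projection_conj V P S : S \in unitmx ->
  is_projection V P -> is_projection (V *m S) (invmx S *m P *m S).
Proof.
move=> Su [PV HP]; split; first by rewrite submxMr // (submx_trans (submxMl _ _) PV).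
move=> v vVS; have vSV : (v *m invmx S <= V)%MS by rewrite -[V](mulmxK Su) submxMr.
by rewrite !mulmxA HP // mulmxKV.
Qed.

Definition euclid_sq v := (v *m v^T) 0 0.

Lemma euclid_sqE v : euclid_sq v = \sum_j v 0 j ^+ 2.
Proof. by rewrite /euclid_sq mxE; apply: eq_bigr => j _; rewrite mxE expr2. Qed.

Lemma euclid_sq_ge0 v : 0 <= euclid_sq v.
Proof. by rewrite euclid_sqE; apply: sumr_ge0 => j _; apply: sqr_ge0. Qed.

Lemma euclid_sq_eq0 v : euclid_sq v = 0 -> v = 0.
Proof.
rewrite euclid_sqE => /eqP; rewrite psumr_eq0 => [/allP v0|j _]; last exact: sqr_ge0.
apply/rowP => j; rewrite mxE; apply/eqP; rewrite -sqrf_eq0.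
by apply: (v0 j); rewrite mem_index_enum.
Qed.

Lemma exists_orthoproj V : exists Q, [/\ is_projection V Q, Q^T = Q & Q *m Q = Q].
Proof.
move: (row_base_free V) (eq_row_base V); move: (row_base V) => B Bfree BV.
pose G := B *m B^T.
have Gu : G \in unitmx.
  rewrite -row_free_unit; apply: inj_row_free => r rG; apply/eqP.
  rewrite -(mulmx_free_eq0 _ Bfree); apply/eqP/euclid_sq_eq0.
  by rewrite /euclid_sq trmx_mul mulmxA -(mulmxA r) rG mul0mx mxE.
pose Q := B^T *m invmx G *m B.
exists Q; split.
- split; first by rewrite -BV submxMl.
  by move=> v; rewrite -BV => /submxP [u ->]; rewrite !mulmxA -(mulmxA u B) mulmxK.
- by rewrite !trmx_mul trmxK trmx_inv trmx_mul trmxK mulmxA.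
- by rewrite !mulmxA -(mulmxA _ B) mulmxK.
Qed.

Lemma euclid_sq_orthoproj_le Q v : Q^T = Q -> Q *m Q = Q ->
  euclid_sq (v *m Q) <= euclid_sq v.
Proof.
move=> QT QQ.
have vQ2 : (v *m Q) *m (v *m Q)^T = v *m Q *m v^T.
  by rewrite trmx_mul QT !mulmxA -(mulmxA v) QQ.
have pythagoras : euclid_sq v = euclid_sq (v *m Q) + euclid_sq (v - v *m Q).
  have addE (A B : 'M[R]_1) : (A + B) 0 0 = A 0 0 + B 0 0 by rewrite mxE.
  rewrite /euclid_sq -addE vQ2 linearB /= mulmxBl !mulmxBr vQ2 trmx_mul QT mulmxA.
  by rewrite subrr subr0 addrC subrK.
by rewrite pythagoras lerDl euclid_sq_ge0.
Qed.

Lemma mxnorm_orthoproj_le Q v : Q^T = Q -> Q *m Q = Q -> `|v *m Q| <= n%:R * `|v|.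
Proof.
move=> QT QQ; rewrite [leLHS]mx_normrE; apply/bigmax_leP; split=> [|[i j] _ /=].
  by rewrite mulr_ge0 ?normr_ge0.
rewrite (ord1 i) -ler_sqr ?nnegrE ?mulr_ge0 // real_normK ?num_real //.
apply: le_trans (_ : euclid_sq (v *m Q) <= _).
  by rewrite euclid_sqE (bigD1 j) //= lerDl sumr_ge0 // => l _; apply: sqr_ge0.
apply: le_trans (euclid_sq_orthoproj_le _ QT QQ) _.
rewrite euclid_sqE; apply: le_trans (_ : \sum_(l < n) `|v| ^+ 2 <= _).
  apply: ler_sum => l _; rewrite -real_normK ?num_real // ler_sqr ?nnegrE //.
  exact: mxnorm_entry_le.
rewrite sumr_const card_ord -[leLHS]mulr_natl exprMn ler_wpM2r ?sqr_ge0 //.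
by rewrite -natrX ler_nat; case: (n) => // m; rewrite leq_pmulr.
Qed.

End Projections.

Section ProjectionConstant.
Variables (R : realType) (n : nat) (N : 'rV[R]_n -> R).
Hypothesis hN : is_norm N.
Implicit Types (V P : 'M[R]_n).

Lemma proj_const_le_opnorm V P : is_projection V P -> proj_const N V <= opnorm N P.
Proof.
move=> hP; apply: ge_inf; last by exists P.
by exists 0 => _ [Q _ <-]; apply: opnorm_ge0.
Qed.

Lemma proj_const_ge0 V : 0 <= proj_const N V.
Proof.
have [P [hP _ _]] := exists_orthoproj V.
apply: lb_le_inf; first by exists (opnorm N P), P.
by move=> _ [Q _ <-]; apply: opnorm_ge0.
Qed.

Lemma proj_const_bounded : exists2 K, 0 <= K & forall V, proj_const N V <= K.
Proof.
have [c c0 cN] := N_le_mxnorm hN; have [c' c'0 c'N] := mxnorm_le_N hN.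
exists (c * n%:R * c') => [|V]; first by rewrite !mulr_ge0.
have [Q [hQ QT QQ]] := exists_orthoproj V.
apply: le_trans (proj_const_le_opnorm hQ) _; apply: (opnorm_le hN) => [|v].
  by rewrite !mulr_ge0.
apply: le_trans (cN _) _; rewrite -!mulrA ler_wpM2l //.
by apply: le_trans (mxnorm_orthoproj_le _ QT QQ) _; rewrite ler_wpM2l.
Qed.

Lemma proj_const_le_scale V (x c : R) : 0 < c ->
  (forall P, is_projection V P -> x <= c * opnorm N P) -> x <= c * proj_const N V.
Proof.
move=> c0 Hx; have [P0 [hP0 _ _]] := exists_orthoproj V.
rewrite mulrC -ler_pdivrMr //; apply: lb_le_inf; first by exists (opnorm N P0), P0.
by move=> _ [P hP <-]; rewrite ler_pdivrMr // mulrC Hx.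
Qed.

(* Conjugating by [1%:M + E] costs a factor [(1 + e) / (1 - e)], which is at
   most [1 + 4 e] for [e <= 1/2]. *)
Lemma proj_const_perturb (Y Y0 E : 'M[R]_n) : \rank Y0 = \rank Y ->
  opnorm N E <= 1 / 2 -> (Y *m (1%:M + E) <= Y0)%MS ->
  proj_const N Y0 <= (1 + 4 * opnorm N E) * proj_const N Y.
Proof.
set e := opnorm N E => rkY0 e_le YSY0.
have e0 : 0 <= e := opnorm_ge0 hN E.
have e1 : e < 1 by apply: le_lt_trans e_le _; lra.
have Su := add1_unitmx hN e1.
have YS : (Y *m (1%:M + E) :=: Y0)%MS.
  apply/eqmxP; rewrite -(mxrank_leqif_eq YSY0).2 rkY0 mxrankMfree //.
  by rewrite row_free_unit.
apply: proj_const_le_scale => [|P hP]; first lra.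
have hQ := is_projection_eqmx YS (is_projection_conj Su hP).
apply: le_trans (proj_const_le_opnorm hQ) _.
apply: le_trans (opnorm_mulmx_le hN _ _) _.
apply: le_trans (_ : _ <= (1 - e)^-1 * opnorm N P * (1 + e)) _.
  apply: ler_pM; rewrite ?opnorm_ge0 ?opnorm_add1_le //.
  apply: le_trans (opnorm_mulmx_le hN _ _) _.
  by apply: ler_pM; rewrite ?opnorm_ge0 ?opnorm_inv_add1_le.
rewrite mulrAC ler_wpM2r ?opnorm_ge0 // mulrC ler_pdivrMr ?subr_gt0 //.
nra.
Qed.

End ProjectionConstant.

Section SphereDistance.
Variables (R : realType) (n : nat) (N : 'rV[R]_n -> R).
Hypothesis hN : is_norm N.
Implicit Types (V Y Z : 'M[R]_n).

Lemma unit_sphere_nonempty V : (0 < \rank V)%N -> exists z, unit_sphere N V z.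
Proof.
move=> rkV; have [i Vi0] : exists i, row i V != 0.
  apply/existsP; apply: contraTT rkV => /existsPn V0.
  suff -> : V = 0 by rewrite mxrank0.
  by apply/row_matrixP => i; rewrite row0; apply/eqP/negPn/V0.
exists ((N (row i V))^-1 *: row i V); split; last exact: N_normalize.
by rewrite scalemx_sub ?row_sub.
Qed.

Lemma has_inf_dist_sphere Z u : (exists z, unit_sphere N Z z) ->
  has_inf [set N (u - z) | z in unit_sphere N Z].
Proof.
move=> [z0 hz0]; split; first by exists (N (u - z0)), z0.
by exists 0 => _ [z _ <-]; apply: N_ge0.
Qed.

Lemma dist_sphere_le_sphere_dist Y Z u : (exists z, unit_sphere N Z z) ->
  unit_sphere N Y u -> inf [set N (u - z) | z in unit_sphere N Z] <= sphere_dist N Y Z.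
Proof.
move=> [z0 hz0] hu; rewrite /sphere_dist le_max; apply/orP; left.
apply: ub_le_sup; last by exists u.
exists 2 => _ [y hy <-]; apply: le_trans (ge_inf (has_inf_dist_sphere y _).2 _) _.
- by exists z0.
- by exists z0.
- by apply: le_trans (ND_le hN _ _) _; rewrite NN // hy.2 hz0.2.
Qed.

Lemma sphere_dist_ge0 Y Z : (exists y, unit_sphere N Y y) ->
  (exists z, unit_sphere N Z z) -> 0 <= sphere_dist N Y Z.
Proof.
move=> [u hu] hZ; apply: le_trans (dist_sphere_le_sphere_dist hZ hu).
apply: lb_le_inf; first by case: hZ => z hz; exists (N (u - z)), z.
by move=> _ [z _ <-]; apply: N_ge0.
Qed.

Lemma exists_close_vector Y Z y (delta : R) : (exists z, unit_sphere N Z z) ->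
  (y <= Y)%MS -> sphere_dist N Y Z < delta ->
  exists2 z, (z <= Z)%MS & N (z - y) <= delta * N y.
Proof.
move=> hZ yY d_lt; have [->|y0] := eqVneq y 0.
  by exists 0; rewrite ?sub0mx // subr0 N0 // mulr0.
have Ny := N_gt0 hN y0; pose u := (N y)^-1 *: y.
have hu : unit_sphere N Y u by split; [rewrite scalemx_sub | apply: N_normalize].
have gap : 0 < delta - sphere_dist N Y Z by rewrite subr_gt0.
have [_ [z hz <-] z_lt] := inf_adherent gap (has_inf_dist_sphere u hZ).
exists (N y *: z); first by rewrite scalemx_sub //; case: hz.
have -> : N y *: z - y = - (N y *: (u - z)).
  by rewrite scalerBr scalerA mulfV ?gt_eqF // scale1r opprB.
rewrite NN // NZ // (ger0_norm (ltW Ny)) mulrC ler_wpM2r ?(ltW Ny) //.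
apply: ltW; apply: lt_le_trans z_lt _.
by have := dist_sphere_le_sphere_dist hZ hu; lra.
Qed.

Lemma exists_perturbation Y : exists2 M, 0 < M & forall Y0 (delta : R),
  (exists z, unit_sphere N Y0 z) -> 0 <= delta -> sphere_dist N Y Y0 < delta ->
  exists2 E, opnorm N E <= M * delta & (Y *m (1%:M + E) <= Y0)%MS.
Proof.
have [M M0 HM] := sum_coord_le hN (pinvmx Y) (fun i => N_ge0 hN (row i Y)).
exists (M + 1) => [|Y0 delta hY0 delta0 d_lt]; first lra.
have /fin_all_exists [f hf] : forall i, exists z,
    (z <= Y0)%MS /\ N (z - row i Y) <= delta * N (row i Y).
  move=> i; have [z zY0 hz] := exists_close_vector hY0 (row_sub i Y) d_lt.
  by exists z.
pose Z := \matrix_(i, j) f i 0 j.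
have rowZ i : row i Z = f i by apply/rowP => j; rewrite !mxE.
exists (pinvmx Y *m (Z - Y)).
  apply: (opnorm_le hN) => [|w]; first by rewrite mulr_ge0 //; lra.
  rewrite mulmxA mulmx_sum_row; apply: le_trans (N_sum_le hN _ _) _.
  apply: le_trans (_ : _ <= delta * \sum_i `|(w *m pinvmx Y) 0 i| * N (row i Y)) _.
    rewrite mulr_sumr; apply: ler_sum => i _; rewrite NZ // mulrCA ler_wpM2l //.
    by rewrite linearB /= rowZ; case: (hf i).
  rewrite [_ * delta]mulrC -mulrA ler_wpM2l //; apply: le_trans (HM w) _.
  by rewrite ler_wpM2r ?N_ge0 ?lerDl.
rewrite mulmxDr mulmx1 mulmxA mulmxBr mulmxKpV // addrC subrK.
apply: submx_trans (submxMl _ _) _; apply/row_subP => i.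
by rewrite rowZ; case: (hf i).
Qed.

End SphereDistance.

Lemma le_affine_right_limit (R : realFieldType) (x a b d eta : R) :
  0 < eta -> 0 <= b -> (forall delta, d < delta <= d + eta -> x <= a + b * delta) ->
  x <= a + b * d.
Proof.
move=> eta0 b0 Hx; apply/ler_addgt0Pr => t t0.
pose s := Num.min eta (t / (b + 1)).
have s0 : 0 < s by rewrite lt_min eta0 divr_gt0 //; lra.
have bs : b * s <= t.
  apply: le_trans (_ : b * (t / (b + 1)) <= t).
    by rewrite ler_wpM2l // ge_min lexx orbT.
  by rewrite mulrA ler_pdivrMr ?ler_wpM2l //; lra.
apply: le_trans (Hx (d + s) _) _; first by rewrite ltrDl s0 lerD2l ge_min lexx.
by rewrite mulrDr addrA lerD2l.
Qed.

Lemma proj_const_le_near (R : realType) (n : nat) (N : 'rV[R]_n -> R) (Y : 'M[R]_n) :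
  is_norm N -> exists2 M, 0 < M & forall Y0, \rank Y0 = \rank Y -> (0 < \rank Y)%N ->
    0 <= sphere_dist N Y Y0 -> M * sphere_dist N Y Y0 < 1 / 4 ->
    proj_const N Y0 <= proj_const N Y + 4 * M * proj_const N Y * sphere_dist N Y Y0.
Proof.
move=> hN; have [M M0 perturb] := exists_perturbation hN Y.
exists M => // Y0 rkY0 rkY d0 d_small.
have hY0 : exists z, unit_sphere N Y0 z.
  by apply: (unit_sphere_nonempty hN); rewrite rkY0.
have lam0 := proj_const_ge0 hN Y.
have eta0 : 0 < (8 * M)^-1 by rewrite invr_gt0; lra.
apply: (le_affine_right_limit eta0) => [|delta /andP[d_lt d_le]].
  by rewrite !mulr_ge0 //; lra.
have [E E_le YE] := perturb Y0 delta hY0 (le_trans d0 (ltW d_lt)) d_lt.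
have E_half : opnorm N E <= 1 / 2.
  apply: le_trans E_le _; have := ler_wpM2l (ltW M0) d_le.
  by rewrite mulrDr invfM mulrCA mulfV ?gt_eqF // mulr1; lra.
apply: le_trans (proj_const_perturb hN rkY0 E_half YE) _.
by have := ler_wpM2r lam0 E_le; nra.
Qed.

Theorem mainTheorem15 (R : realType) (n k : nat) (N : 'rV[R]_n -> R)
    (Y : 'M[R]_n) :
  is_norm N -> (1 <= k)%N -> (k <= n - 1)%N -> \rank Y = k ->
  exists C : R, 0 < C /\
    forall Y0 : 'M[R]_n, \rank Y0 = k ->
      proj_const N Y0 <= proj_const N Y + C * sphere_dist N Y Y0.
Proof.
move=> hN k1 _ rkY.
have [M M0 near_bound] := proj_const_le_near Y hN.
have [K K0 far_bound] := proj_const_bounded hN.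
have lam0 := proj_const_ge0 hN Y.
exists (4 * M * (proj_const N Y + K) + 1); split=> [|Y0 rkY0].
  by have := mulr_ge0 (ltW M0) (addr_ge0 lam0 K0); lra.
have rk_pos : (0 < \rank Y)%N by rewrite rkY.
have d0 : 0 <= sphere_dist N Y Y0.
  by apply: (sphere_dist_ge0 hN); apply: (unit_sphere_nonempty hN); rewrite ?rkY0 -?rkY.
have [d_small|d_large] := ltP (M * sphere_dist N Y Y0) (1 / 4).
  apply: le_trans (near_bound Y0 _ rk_pos d0 d_small) _; first by rewrite rkY0.
  by have := mulr_ge0 (mulr_ge0 (ltW M0) K0) d0; nra.
apply: le_trans (far_bound Y0) _.
by have := mulr_ge0 (mulr_ge0 (ltW M0) lam0) d0; nra.
Qed.
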